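(* Let $\mathcal C$ be a $G$-category, $(F,\psi)\colon\mathcal C\to\mathcal B$ a $G$-covering and $(I,\nu)$ an essential section of $F$; regard $\mathcal B$ as $G$-graded by the grading induced by $F$ with respect to $(I,\nu)$. Then there is a degree-preserving equivalence $I'\colon\mathcal B\to\mathcal C/G$ of $G$-graded categories such that $(I'F,I'\psi)\cong(P,\phi)$ as $G$-invariant functors, where $(P,\phi)$ is the canonical functor.
   Context: $\Bbbk$ is a commutative ring; all categories are $\Bbbk$-linear; $G$ is a group; a $G$-category is a category with a group homomorphism $G\to\operatorname{Aut}$, $\alpha\mapsto A_\alpha$, written $\alpha x,\alpha f$. $G$-invariant functor $(F,\psi)$: natural isos $\psi_\alpha\colon F\to FA_\alpha$, $\psi_1=\mathrm{id}$, $(\psi_\beta A_\alpha)\psi_\alpha=\psi_{\beta\alpha}$; morphisms are natural transformations $\eta$ with $(\eta A_\alpha)\psi_\alpha=\psi'_\alpha\eta$. $F^{(1)}_{x,y}\colon\bigoplus_\alpha\mathcal C(\alpha x,y)\to\mathcal B(Fx,Fy)$, $(f_\alpha)\mapsto\sum F(f_\alpha)\psi_{\alpha,x}$; $G$-covering: all $F^{(1)}_{x,y}$ bijective and $F$ dense. An essential section of a dense functor $F$ is a pair $(I,\nu)$, where $I=(I_x)_{x\in\mathcal B}$ takes values in a class $\mathcal I\subseteq\operatorname{obj}\mathcal C$ on which $F$ is injective and such that $\{Fu\mid u\in\mathcal I\}$ is a complete set of representatives of isoclasses of $F(\operatorname{obj}\mathcal C)$, and $\nu_x\colon F(I_x)\to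 x$ are isomorphisms, with $\nu_x=\mathrm{id}$ when $x\in F(\mathcal I)$. The induced grading is $\mathcal B^\alpha(x,y):=\nu_yF^{(1)}_{I_x,I_y}(\mathcal C(\alpha I_x,I_y))\nu_x^{-1}$. Orbit category $\mathcal C/G$: objects of $\mathcal C$; morphisms $x\to y$ are row- and column-finite families $(f_{\beta,\alpha})$, $f_{\beta,\alpha}\in\mathcal C(\alpha x,\beta y)$, $f_{\gamma\beta,\gamma\alpha}=\gamma(f_{\beta,\alpha})$; composition $(gf)_{\beta,\alpha}=\sum_\gamma g_{\beta,\gamma}f_{\gamma,\alpha}$. $Px=x$, $P(f)=(\delta_{\alpha,\beta}\alpha f)$, $\phi_{\mu,x}=(\delta_{\alpha,\beta\mu}\mathrm{id}_{\alpha x})_{(\alpha,\beta)}$. $\mathcal C/G$ is $G$-graded by $(\mathcal C/G)^\alpha(x,y)=P^{(1)}_{x,y}(\mathcal C(\alpha x,y))$. A functor of $G$-graded categories is degree-preserving if it maps degree-$\alpha$ morphisms to degree-$\alpha$ morphisms. *)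

From HB Require Import structures.
From mathcomp Require Import all_boot all_algebra.
Require Stdlib.Lists.List.
Set Implicit Arguments. Unset Strict Implicit. Unset Printing Implicit Defensive.
Import GRing.Theory.
Local Open Scope ring_scope.

Record grp := Group {
  gcar :> Type;
  gmul : gcar -> gcar -> gcar;
  gone : gcar;
  ginv : gcar -> gcar;
  gmulA : forall a b c, gmul a (gmul b c) = gmul (gmul a b) c;
  gmul1g : forall a, gmul gone a = a;
  gmulVg : forall a, gmul (ginv a) a = gone }.
Arguments gmul {g}. Arguments gone {g}. Arguments ginv {g}.

Record lincat (k : comPzRingType) := LinCat {
  cobj :> Type;
  chom : cobj -> cobj -> lmodType k;
  cid : forall x, chom x x;
  ccomp : forall x y z, chom y z -> chom x y -> chom x z;
  ccompA : forall x y z w (h : chom z w) (g : chom y z) (f : chom x y),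
      ccomp h (ccomp g f) = ccomp (ccomp h g) f;
  ccomp1l : forall x y (f : chom x y), ccomp (cid y) f = f;
  ccomp1r : forall x y (f : chom x y), ccomp f (cid x) = f;
  ccompDl : forall x y z (c : k) (g1 g2 : chom y z) (f : chom x y),
      ccomp (c *: g1 + g2) f = c *: ccomp g1 f + ccomp g2 f;
  ccompDr : forall x y z (c : k) (g : chom y z) (f1 f2 : chom x y),
      ccomp g (c *: f1 + f2) = c *: ccomp g f1 + ccomp g f2 }.
Arguments chom {k} l x y.
Arguments cid {k l} x.
Arguments ccomp {k l x y z}.

Section Cats.
Variable k : comPzRingType.

Definition is_iso (C : lincat k) (x y : C) (f : chom C x y) : Prop :=
  exists g : chom C y x, ccomp g f = cid x /\ ccomp f g = cid y.

Definition isomorphic (C : lincat k) (x y : C) : Prop :=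
  exists f : chom C x y, is_iso f.

Definition cast_hom (C : lincat k) (x x' y y' : C) (ex : x = x') (ey : y = y')
  (f : chom C x y) : chom C x' y' :=
  match ex in _ = x0 return chom C x0 y' with
  | erefl => match ey in _ = y0 return chom C x y0 with erefl => f end
  end.

Record klinfun (C D : lincat k) := LinFun {
  fobj : C -> D;
  fhom : forall x y, chom C x y -> chom D (fobj x) (fobj y);
  fhom_id : forall x, fhom (cid x) = cid (fobj x);
  fhom_comp : forall x y z (g : chom C y z) (f : chom C x y),
      fhom (ccomp g f) = ccomp (fhom g) (fhom f);
  fhom_lin : forall x y (c : k) (f g : chom C x y),
      fhom (c *: f + g) = c *: fhom f + fhom g }.
Arguments fhom {C D} _ {x y}.

Record gcat (G : grp) := GCat {
  gc :> lincat k;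
  gact : G -> klinfun gc gc;
  gact1_obj : forall x, fobj (gact gone) x = x;
  gact1_hom : forall x y (f : chom gc x y),
      cast_hom (gact1_obj x) (gact1_obj y) (fhom (gact gone) f) = f;
  gactM_obj : forall a b x,
      fobj (gact b) (fobj (gact a) x) = fobj (gact (gmul b a)) x;
  gactM_hom : forall a b x y (f : chom gc x y),
      cast_hom (gactM_obj a b x) (gactM_obj a b y) (fhom (gact b) (fhom (gact a) f))
      = fhom (gact (gmul b a)) f }.

Definition act (G : grp) (C : gcat G) (a : G) (x : C) : C := fobj (gact C a) x.
Arguments act {G} C a x.
Definition acth (G : grp) (C : gcat G) (a : G) (x y : C) (f : chom C x y)
  : chom C (act C a x) (act C a y) := fhom (gact C a) f.
Arguments acth {G C} a {x y} f.

Section GInv.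
Variables (G : grp) (C : gcat G) (B : lincat k) (F : klinfun C B)
  (psi : forall (a : G) (x : C), chom B (fobj F x) (fobj F (act C a x))).

Definition ginv_functor : Prop :=
  [/\ (forall a (x y : C) (f : chom C x y),
         ccomp (psi a y) (fhom F f) = ccomp (fhom F (acth a f)) (psi a x)),
      (forall a x, is_iso (psi a x)),
      (forall x, cast_hom erefl (congr1 (fobj F) (gact1_obj x)) (psi gone x)
                 = cid (fobj F x)) &
      (forall a b x,
         cast_hom erefl (congr1 (fobj F) (gactM_obj a b x))
           (ccomp (psi b (act C a x)) (psi a x)) = psi (gmul b a) x)].

(* g is the image under F^(1)_{x,y} of the finitely supported family f *)
Definition F1_rep (x y : C) (f : forall a : G, chom C (act C a x) y)
  (g : chom B (fobj F x) (fobj F y)) : Prop :=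
  exists s : seq G, List.NoDup s /\ (forall a, ~ List.In a s -> f a = 0) /\
    g = \sum_(a <- s) ccomp (fhom F (f a)) (psi a x).

Definition gcovering : Prop :=
  [/\ ginv_functor,
      (forall (x y : C) (g : chom B (fobj F x) (fobj F y)), exists! f, F1_rep f g) &
      (forall z : B, exists x : C, isomorphic (fobj F x) z)].

Definition ess_section (I : B -> C) (nu : forall z : B, chom B (fobj F (I z)) z)
  : Prop :=
  exists Icl : C -> Prop,
  [/\ (forall z, Icl (I z)) /\
        (forall u v, Icl u -> Icl v -> fobj F u = fobj F v -> u = v),
      forall x : C, exists u, Icl u /\ isomorphic (fobj F u) (fobj F x),
      forall u v, Icl u -> Icl v -> isomorphic (fobj F u) (fobj F v) ->
                  fobj F u = fobj F v,
      forall z, is_iso (nu z) &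
      forall u, Icl u -> exists e : fobj F (I (fobj F u)) = fobj F u,
                  cast_hom e erefl (nu (fobj F u)) = cid (fobj F u)].

(* g lies in B^a(z,w) = nu_w F^(1)(C(a I_z, I_w)) nu_z^{-1} *)
Definition ind_deg (I : B -> C) (nu : forall z : B, chom B (fobj F (I z)) z)
  (a : G) (z w : B) (g : chom B z w) : Prop :=
  exists f : chom C (act C a (I z)) (I w),
    ccomp g (nu z) = ccomp (nu w) (ccomp (fhom F f) (psi a (I z))).
End GInv.

Section Orbit.
Variables (G : grp) (C : gcat G).

Definition orbfam (x y : C) := forall b a : G, chom C (act C a x) (act C b y).

Definition is_orbmor (x y : C) (f : orbfam x y) : Prop :=
  [/\ (forall a, exists s : seq G, forall b, ~ List.In b s -> f b a = 0),
      (forall b, exists s : seq G, forall a, ~ List.In a s -> f b a = 0) &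
      (forall c b a, f (gmul c b) (gmul c a)
           = cast_hom (gactM_obj a c x) (gactM_obj b c y) (acth c (f b a)))].

Definition orb_comp_rel (x y z : C) (g : orbfam y z) (f : orbfam x y)
  (h : orbfam x z) : Prop :=
  forall b a, exists s : seq G, List.NoDup s /\
    (forall c, ~ List.In c s -> ccomp (g b c) (f c a) = 0) /\
    h b a = \sum_(c <- s) ccomp (g b c) (f c a).

Definition orb_id (x : C) (f : orbfam x x) : Prop :=
  (forall a, f a a = cid (act C a x)) /\ (forall a b, a <> b -> f b a = 0).

Definition orb_iso (x y : C) (f : orbfam x y) : Prop :=
  exists g : orbfam y x, is_orbmor g /\
    (exists i, orb_comp_rel g f i /\ orb_id i) /\
    (exists i, orb_comp_rel f g i /\ orb_id i).

Definition orb_isomorphic (x y : C) : Prop :=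
  exists f : orbfam x y, is_orbmor f /\ orb_iso f.

Definition is_Pimg (x y : C) (f : chom C x y) (F : orbfam x y) : Prop :=
  (forall a, F a a = acth a f) /\ (forall a b, a <> b -> F b a = 0).

Definition is_phi (mu : G) (x : C) (F : orbfam x (act C mu x)) : Prop :=
  (forall b, F b (gmul b mu)
             = cast_hom erefl (esym (gactM_obj mu b x)) (cid (act C (gmul b mu) x))) /\
  (forall a b, a <> gmul b mu -> F b a = 0).

(* h lies in (C/G)^a(x,y) = P^(1)_{x,y}(C(a x, y)) *)
Definition orb_deg (a : G) (x y : C) (h : orbfam x y) : Prop :=
  exists (f : chom C (act C a x) y) (Pf : orbfam (act C a x) y)
         (ph : orbfam x (act C a x)),
    is_Pimg f Pf /\ is_phi ph /\ orb_comp_rel Pf ph h.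

Definition orb_equivalence (B : lincat k) (Iobj : B -> C)
  (Ihom : forall z w : B, chom B z w -> orbfam (Iobj z) (Iobj w)) : Prop :=
  [/\ (forall z w (g : chom B z w), is_orbmor (Ihom z w g)) /\
        (forall z, orb_id (Ihom z z (cid z))),
      (forall z w v (g : chom B w v) (f : chom B z w),
          orb_comp_rel (Ihom w v g) (Ihom z w f) (Ihom z v (ccomp g f))),
      (forall z w (c : k) (f g : chom B z w),
          Ihom z w (c *: f + g) = fun b a => c *: Ihom z w f b a + Ihom z w g b a),
      (forall z w (h : orbfam (Iobj z) (Iobj w)), is_orbmor h ->
          exists! g : chom B z w, Ihom z w g = h) &
      (forall x : C, exists z : B, orb_isomorphic x (Iobj z))].

Definition ginv_iso_to_P (B : lincat k) (F : klinfun C B)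
  (psi : forall (a : G) (x : C), chom B (fobj F x) (fobj F (act C a x)))
  (Iobj : B -> C) (Ihom : forall z w : B, chom B z w -> orbfam (Iobj z) (Iobj w))
  (eta : forall x : C, orbfam (Iobj (fobj F x)) x) : Prop :=
  [/\ (forall x, is_orbmor (eta x) /\ orb_iso (eta x)),
      (forall (x y : C) (f : chom C x y),
         exists h, orb_comp_rel (eta y) (Ihom _ _ (fhom F f)) h /\
           exists Pf, is_Pimg f Pf /\ orb_comp_rel Pf (eta x) h) &
      (forall a (x : C),
         exists h, orb_comp_rel (eta (act C a x)) (Ihom _ _ (psi a x)) h /\
           exists ph, is_phi ph /\ orb_comp_rel ph (eta x) h)].
End Orbit.
End Cats.
Arguments act {k G} C a x.
Arguments gcat {k} G.
Arguments klinfun {k} C D.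
Arguments orbfam {k G} C x y.
Arguments gcovering {k G C B} F psi.
Arguments ess_section {k G C B} F I nu.
Arguments ind_deg {k G C B} F psi I nu a {z w} g.
Arguments orb_equivalence {k G C B} Iobj Ihom.
Arguments orb_deg {k G C} a {x y} h.
Arguments ginv_iso_to_P {k G C B} F psi Iobj Ihom eta.

(* Since every F^(1)_{x,y} is bijective, each g : B(Fx, Fy) has a unique
   finitely supported family of coefficients coef g with
   g = sum_a F(coef g a) psi_{a,x}.  The assignment
   g |-> (coef (psi_{b,y} g) a)_{b,a} is a fully faithful k-linear functor
   from the full image of F into C/G which sends F f to P f and psi_{mu,x}
   to phi_{mu,x}; the compatibility with the G-action comes from the cocycle
   identity of psi.  Transporting it along the isomorphisms nu gives I', it
   maps the induced grading to the grading of C/G, and the nu themselves give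
   the isomorphism I'F ~= P. *)
From HB Require Import structures.
From mathcomp Require Import all_boot all_algebra.
From Stdlib Require Import ClassicalEpsilon ProofIrrelevance FunctionalExtensionality.
Set Implicit Arguments. Unset Strict Implicit. Unset Printing Implicit Defensive.
Import GRing.Theory.
Local Open Scope ring_scope.

(* Finite supports are handled as duplicate-free sequences, which needs an
   eqType structure on G; classically every type has one. *)
Definition gdec (G : grp) (a b : G) : {a = b} + {a <> b} :=
  excluded_middle_informative (a = b).
Definition geqb (G : grp) (a b : G) : bool := if gdec a b then true else false.
Lemma geqP (G : grp) : Equality.axiom (@geqb G).
Proof. by move=> a b; rewrite /geqb; case: gdec => h; constructor. Qed.
HB.instance Definition _ (G : grp) := hasDecEq.Build (gcar G) (@geqP G).

Section GroupTheory.
Variable G : grp.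
Implicit Types a b c : G.

Lemma gmulVK a b : gmul (ginv a) (gmul a b) = b.
Proof. by rewrite gmulA gmulVg gmul1g. Qed.

Lemma gmulI a : injective (gmul a).
Proof. by move=> b c h; rewrite -(gmulVK a b) h gmulVK. Qed.

Lemma gmulgV a : gmul a (ginv a) = gone.
Proof.
rewrite -[LHS]gmul1g -{1}(gmulVg (ginv a)) -gmulA.
by rewrite [gmul (ginv a) _]gmulA gmulVg gmul1g gmulVg.
Qed.

Lemma gmulg1 a : gmul a gone = a.
Proof. by rewrite -(gmulVg a) gmulA gmulgV gmul1g. Qed.

Lemma gmulKV a b : gmul a (gmul (ginv a) b) = b.
Proof. by rewrite gmulA gmulgV gmul1g. Qed.

Lemma ginvK a : ginv (ginv a) = a.
Proof. by apply: (@gmulI (ginv a)); rewrite gmulgV gmulVg. Qed.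

Lemma ginvM a b : ginv (gmul a b) = gmul (ginv b) (ginv a).
Proof. by apply: (@gmulI (gmul a b)); rewrite gmulgV -gmulA gmulKV gmulgV. Qed.
End GroupTheory.

Section LinCatTheory.
Variables (k : comPzRingType) (C : lincat k).

Lemma ccomp_addl x y z (g1 g2 : chom C y z) (f : chom C x y) :
  ccomp (g1 + g2) f = ccomp g1 f + ccomp g2 f.
Proof. by have := ccompDl 1 g1 g2 f; rewrite !scale1r. Qed.

Lemma ccomp_addr x y z (g : chom C y z) (f1 f2 : chom C x y) :
  ccomp g (f1 + f2) = ccomp g f1 + ccomp g f2.
Proof. by have := ccompDr 1 g f1 f2; rewrite !scale1r. Qed.

Lemma ccomp0l x y z (f : chom C x y) : ccomp (0 : chom C y z) f = 0.
Proof.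
apply: (@addrI _ (ccomp (0 : chom C y z) f)).
by rewrite -ccomp_addl !addr0.
Qed.

Lemma ccomp0r x y z (g : chom C y z) : ccomp g (0 : chom C x y) = 0.
Proof.
apply: (@addrI _ (ccomp g (0 : chom C x y))).
by rewrite -ccomp_addr !addr0.
Qed.

Lemma ccomp_suml x y z (I : Type) (s : seq I) (g : I -> chom C y z) (f : chom C x y) :
  ccomp (\sum_(i <- s) g i) f = \sum_(i <- s) ccomp (g i) f.
Proof. by elim: s => [|i s IH]; rewrite ?big_nil ?ccomp0l // !big_cons ccomp_addl IH. Qed.

Lemma ccomp_sumr x y z (I : Type) (s : seq I) (g : chom C y z) (f : I -> chom C x y) :
  ccomp g (\sum_(i <- s) f i) = \sum_(i <- s) ccomp g (f i).
Proof. by elim: s => [|i s IH]; rewrite ?big_nil ?ccomp0r // !big_cons ccomp_addr IH. Qed.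

Lemma iso_cancel x y z (p : chom C y z) (f g : chom C x y) :
  is_iso p -> ccomp p f = ccomp p g -> f = g.
Proof. by case=> q [hq _] E; rewrite -[f]ccomp1l -[g]ccomp1l -hq -!ccompA E. Qed.

Lemma cast_homK x x' x'' y y' y'' (e1 : x = x') (e2 : y = y') (e3 : x' = x'')
  (e4 : y' = y'') (f : chom C x y) :
  cast_hom e3 e4 (cast_hom e1 e2 f) = cast_hom (etrans e1 e3) (etrans e2 e4) f.
Proof. by destruct e3, e4, e1, e2. Qed.

Lemma cast_hom_pi x x' y y' (e1 e1' : x = x') (e2 e2' : y = y') (f : chom C x y) :
  cast_hom e1 e2 f = cast_hom e1' e2' f.
Proof. by rewrite (proof_irrelevance _ e1 e1') (proof_irrelevance _ e2 e2'). Qed.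

Lemma cast_hom_id x y (e1 : x = x) (e2 : y = y) (f : chom C x y) : cast_hom e1 e2 f = f.
Proof. exact: (cast_hom_pi e1 erefl e2 erefl). Qed.

Lemma cast_hom0 x x' y y' (e1 : x = x') (e2 : y = y') : cast_hom e1 e2 (0 : chom C x y) = 0.
Proof. by destruct e1, e2. Qed.

Lemma cast_hom_ccompl x y z z' (e : z = z') (g : chom C y z) (f : chom C x y) :
  cast_hom erefl e (ccomp g f) = ccomp (cast_hom erefl e g) f.
Proof. by destruct e. Qed.
End LinCatTheory.

Section FunctorTheory.
Variables (k : comPzRingType) (C D : lincat k) (F : klinfun C D).

Lemma fhomD x y (f g : chom C x y) : fhom F (f + g) = fhom F f + fhom F g.
Proof. by have := fhom_lin F 1 f g; rewrite !scale1r. Qed.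

Lemma fhom0 x y : fhom F (0 : chom C x y) = 0.
Proof. by apply: (@addrI _ (fhom F (0 : chom C x y))); rewrite -fhomD !addr0. Qed.

Lemma fhom_cast x x' y y' (e1 : x = x') (e2 : y = y') (f : chom C x y) :
  fhom F (cast_hom e1 e2 f)
  = cast_hom (congr1 (fobj F) e1) (congr1 (fobj F) e2) (fhom F f).
Proof. by destruct e1, e2. Qed.

Lemma fhom_cast_src x1 x2 y (e : x1 = x2) (f : chom C x1 y) z (p : chom D z (fobj F x2)) :
  ccomp (fhom F f) (cast_hom erefl (esym (congr1 (fobj F) e)) p)
  = ccomp (fhom F (cast_hom e erefl f)) p.
Proof. by destruct e. Qed.
End FunctorTheory.

Lemma In_mem (T : eqType) (a : T) (s : seq T) : List.In a s <-> a \in s.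
Proof.
elim: s => [|b s IH] //=; rewrite in_cons; split.
- by case=> [->|/IH ->]; rewrite ?eqxx ?orbT.
- by case/orP=> [/eqP ->|/IH]; [left|right].
Qed.

Lemma NoDup_uniq (T : eqType) (s : seq T) : List.NoDup s <-> uniq s.
Proof.
elim: s => [|b s IH] /=; first by split => // _; constructor.
split.
- by move=> h; inversion h; subst; apply/andP; split; [apply/negP => /In_mem | apply/IH].
- by case/andP=> hb hs; constructor; [move/In_mem; apply/negP | apply/IH].
Qed.

Lemma eq_big_supp (T : eqType) (M : nmodType) (h : T -> M) (s1 s2 : seq T) :
  uniq s1 -> uniq s2 ->
  (forall a, a \notin s1 -> h a = 0) -> (forall a, a \notin s2 -> h a = 0) ->
  \sum_(a <- s1) h a = \sum_(a <- s2) h a.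
Proof.
move=> u1 u2 h1 h2.
have restrict (s s' : seq T) : (forall a, a \notin s' -> h a = 0) ->
    \sum_(a <- s) h a = \sum_(a <- filter (mem s') s) h a.
  move=> hs; rewrite big_filter [RHS]big_mkcond; apply: eq_bigr => a _.
  by case: ifP => // /negbT /hs ->.
rewrite (restrict s1 s2 h2) (restrict s2 s1 h1); apply: perm_big.
by apply: uniq_perm; rewrite ?filter_uniq // => a; rewrite !mem_filter andbC.
Qed.

Section Coefficients.
Variables (k : comPzRingType) (G : grp) (C : gcat G) (B : lincat k) (F : klinfun C B)
  (psi : forall (a : G) (x : C), chom B (fobj F x) (fobj F (act C a x))).
Hypothesis F1_bij :
  forall (x y : C) (g : chom B (fobj F x) (fobj F y)), exists! f, F1_rep psi f g.

Lemma F1_repP x y (f : forall a : G, chom C (act C a x) y) g :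
  F1_rep psi f g <->
  exists s : seq G, [/\ uniq s, (forall a, a \notin s -> f a = 0) &
    g = \sum_(a <- s) ccomp (fhom F (f a)) (psi a x)].
Proof.
split.
- case=> s [/NoDup_uniq us [hs Eg]]; exists s; split=> // a ha.
  by apply: hs; move/In_mem; apply/negP.
- case=> s [us hs Eg]; exists s; split; first exact/NoDup_uniq.
  by split=> // a ha; apply: hs; apply/negP => /In_mem.
Qed.

Definition coef x y (u : chom B (fobj F x) (fobj F y)) : forall a : G, chom C (act C a x) y :=
  proj1_sig (constructive_indefinite_description _
    (match F1_bij u with ex_intro f (conj h _) => ex_intro _ f h end)).

Lemma coef_F1_rep x y (u : chom B (fobj F x) (fobj F y)) : F1_rep psi (coef u) u.
Proof. by rewrite /coef; case: constructive_indefinite_description. Qed.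

Lemma coef_spec x y (u : chom B (fobj F x) (fobj F y)) :
  exists s : seq G, [/\ uniq s, (forall a, a \notin s -> coef u a = 0) &
    u = \sum_(a <- s) ccomp (fhom F (coef u a)) (psi a x)].
Proof. exact/F1_repP/coef_F1_rep. Qed.

Lemma coef_unique x y (u : chom B (fobj F x) (fobj F y)) f : F1_rep psi f u -> coef u = f.
Proof.
move=> hf; case: (F1_bij u) => f0 [_ H].
by rewrite -(H _ hf) -(H _ (coef_F1_rep u)).
Qed.

Lemma coef_sum_rep x y (s : seq G) (f : forall a : G, chom C (act C a x) y) :
  uniq s -> (forall a, a \notin s -> f a = 0) ->
  coef (\sum_(a <- s) ccomp (fhom F (f a)) (psi a x)) = f.
Proof. by move=> us hs; apply/coef_unique/F1_repP; exists s. Qed.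

Lemma coef_expand x y (u : chom B (fobj F x) (fobj F y)) (s : seq G) :
  uniq s -> (forall a, a \notin s -> coef u a = 0) ->
  u = \sum_(a <- s) ccomp (fhom F (coef u a)) (psi a x).
Proof.
move=> us hs; case: (coef_spec u) => s0 [us0 hs0 Eu].
rewrite {1}Eu; apply: eq_big_supp => // a ha.
- by rewrite hs0 // fhom0 ccomp0l.
- by rewrite hs // fhom0 ccomp0l.
Qed.

Lemma coef_lin x y c (u v : chom B (fobj F x) (fobj F y)) :
  coef (c *: u + v) = fun a => c *: coef u a + coef v a.
Proof.
case: (coef_spec u) => su [_ hu _]; case: (coef_spec v) => sv [_ hv _].
set t := undup (su ++ sv).
have ut : uniq t by apply: undup_uniq.
have [tu tv] : (forall a, a \notin t -> a \notin su) /\ (forall a, a \notin t -> a \notin sv).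
  by split=> a; rewrite mem_undup mem_cat negb_or => /andP[].
have supp_t a : a \notin t -> c *: coef u a + coef v a = 0.
  by move=> ha; rewrite hu ?hv ?tu ?tv // scaler0 addr0.
apply/coef_unique/F1_repP; exists t; split=> //.
rewrite {1}(coef_expand ut (fun a ha => hu a (tu a ha))).
rewrite {1}(coef_expand ut (fun a ha => hv a (tv a ha))).
rewrite scaler_sumr -big_split /=; apply: eq_bigr => a _.
by rewrite fhom_lin ccompDl.
Qed.

Lemma coefD x y (u v : chom B (fobj F x) (fobj F y)) a :
  coef (u + v) a = coef u a + coef v a.
Proof. by have := coef_lin 1 u v; rewrite !scale1r => ->; rewrite scale1r. Qed.

Lemma coef0 x y a : coef (0 : chom B (fobj F x) (fobj F y)) a = 0.
Proof.
apply: (@addrI _ (coef (0 : chom B (fobj F x) (fobj F y)) a)).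
by rewrite -coefD !addr0.
Qed.

Lemma coef_sum x y (I : Type) (s : seq I) (u : I -> chom B (fobj F x) (fobj F y)) a :
  coef (\sum_(i <- s) u i) a = \sum_(i <- s) coef (u i) a.
Proof. by elim: s => [|i s IH]; rewrite ?big_nil ?coef0 // !big_cons coefD IH. Qed.

Lemma coef_inj x y (u v : chom B (fobj F x) (fobj F y)) :
  (forall a, coef u a = coef v a) -> u = v.
Proof.
move=> h; suff: (-1) *: v + u = 0.
  by move=> h0; apply/eqP; rewrite -subr_eq0 addrC -scaleN1r h0.
case: (coef_spec ((-1) *: v + u)) => s [_ _ ->].
by rewrite big1 // => a _; rewrite coef_lin h scaleN1r addNr fhom0 ccomp0l.
Qed.

Lemma coef_Fcomp x y z (b : chom C y z) (u : chom B (fobj F x) (fobj F y)) a :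
  coef (ccomp (fhom F b) u) a = ccomp b (coef u a).
Proof.
case: (coef_spec u) => s [us hs Eu].
have -> : ccomp (fhom F b) u = \sum_(a <- s) ccomp (fhom F (ccomp b (coef u a))) (psi a x).
  by rewrite {1}Eu ccomp_sumr; apply: eq_bigr => c _; rewrite fhom_comp ccompA.
by rewrite coef_sum_rep // => c hc; rewrite hs // ccomp0r.
Qed.

Lemma coef_cast x y y' (e : y = y') (u : chom B (fobj F x) (fobj F y)) a :
  coef (cast_hom erefl (congr1 (fobj F) e) u) a = cast_hom erefl e (coef u a).
Proof. by destruct e. Qed.

Definition delta x y (c : G) (f : chom C (act C c x) y) (a : G) : chom C (act C a x) y :=
  match gdec c a with
  | left e => cast_hom (congr1 (fun t => act C t x) e) erefl f
  | right _ => 0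
  end.

Lemma delta_eq x y c (f : chom C (act C c x) y) : delta f c = f.
Proof. by rewrite /delta; case: gdec => // e; rewrite cast_hom_id. Qed.

Lemma delta_neq x y c (f : chom C (act C c x) y) a : c <> a -> delta f a = 0.
Proof. by rewrite /delta; case: gdec. Qed.

Lemma coef_single x y c (f : chom C (act C c x) y) :
  coef (ccomp (fhom F f) (psi c x)) = delta f.
Proof.
have -> : ccomp (fhom F f) (psi c x)
          = \sum_(a <- [:: c]) ccomp (fhom F (delta f a)) (psi a x).
  by rewrite big_seq1 delta_eq.
by apply: coef_sum_rep => // a; rewrite inE => /eqP ne; apply: delta_neq => e; apply: ne.
Qed.
End Coefficients.

Section Lift.
Variables (k : comPzRingType) (G : grp) (C : gcat G) (B : lincat k) (F : klinfun C B)
  (psi : forall (a : G) (x : C), chom B (fobj F x) (fobj F (act C a x))).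
Hypothesis F1_bij :
  forall (x y : C) (g : chom B (fobj F x) (fobj F y)), exists! f, F1_rep psi f g.
Hypothesis psi_inv : ginv_functor psi.

Local Notation coef := (coef F1_bij).

Lemma psi_nat a (x y : C) (f : chom C x y) :
  ccomp (psi a y) (fhom F f) = ccomp (fhom F (acth a f)) (psi a x).
Proof. by case: psi_inv => h _ _ _; apply: h. Qed.

Lemma psi_iso a x : is_iso (psi a x).
Proof. by case: psi_inv => _ h _ _; apply: h. Qed.

Lemma psiM b c x :
  psi (gmul b c) x = cast_hom erefl (congr1 (fobj F) (gactM_obj c b x))
                       (ccomp (psi b (act C c x)) (psi c x)).
Proof. by case: psi_inv => _ _ _ ->. Qed.

Lemma psi_comp b c x :
  ccomp (psi b (act C c x)) (psi c x)
  = cast_hom erefl (esym (congr1 (fobj F) (gactM_obj c b x))) (psi (gmul b c) x).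
Proof. by rewrite psiM cast_homK cast_hom_id. Qed.

Lemma coef_psi b (x y : C) (u : chom B (fobj F x) (fobj F y)) c :
  coef (ccomp (psi b y) u) (gmul b c)
  = cast_hom (gactM_obj c b x) erefl (acth b (coef u c)).
Proof.
case: (coef_spec F1_bij u) => s [us hs Eu].
set Y := fun c' => cast_hom (gactM_obj c' b x) erefl (acth b (coef u c')).
have -> : ccomp (psi b y) u = \sum_(c' <- s) ccomp (fhom F (Y c')) (psi (gmul b c') x).
  rewrite {1}Eu ccomp_sumr; apply: eq_bigr => c' _.
  by rewrite ccompA psi_nat -ccompA psi_comp fhom_cast_src.
rewrite (coef_sum F1_bij); under eq_bigr => c' _ do rewrite (coef_single F1_bij).
have delta_off c' : c' != c -> delta (Y c') (gmul b c) = 0.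
  by move=> ne; apply: delta_neq => /gmulI e; rewrite e eqxx in ne.
case: (boolP (c \in s)) => cs.
- rewrite (big_rem c cs) /= delta_eq big1_seq ?addr0 // => c' /andP[_ hc'].
  by apply: delta_off; apply: contraTneq hc' => ->; rewrite mem_rem_uniqF.
- rewrite hs // /acth fhom0 cast_hom0 big1_seq // => c' /andP[_ hc'].
  by apply: delta_off; apply: contraNneq cs => <-.
Qed.

(* Inverse of the bijection (C/G)(x, y) -> B(Fx, Fy), h |-> sum_a F(h_{1,a}) psi_{a,x}. *)
Definition lift (x y : C) (g : chom B (fobj F x) (fobj F y)) : orbfam C x y :=
  fun b a => coef (ccomp (psi b y) g) a.

Lemma lift_shift (x y : C) (g : chom B (fobj F x) (fobj F y)) b c :
  lift g b (gmul b c) = cast_hom (gactM_obj c b x) erefl (acth b (coef g c)).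
Proof. exact: coef_psi. Qed.

Lemma lift_equivariant (x y : C) (g : chom B (fobj F x) (fobj F y)) c b a :
  lift g (gmul c b) (gmul c a)
  = cast_hom (gactM_obj a c x) (gactM_obj b c y) (acth c (lift g b a)).
Proof.
rewrite /lift psiM -cast_hom_ccompl -ccompA.
by rewrite (coef_cast F1_bij) coef_psi cast_homK; apply: cast_hom_pi.
Qed.

Lemma lift_orbmor (x y : C) (g : chom B (fobj F x) (fobj F y)) : is_orbmor (lift g).
Proof.
split.
- move=> a; case: (coef_spec F1_bij g) => s [_ hs _].
  exists (map (fun c => gmul a (ginv c)) s) => b hb.
  have := lift_shift g b (gmul (ginv b) a); move: (gactM_obj _ _ _).
  rewrite gmulKV => e ->; rewrite hs ?/acth ?fhom0 ?cast_hom0 //.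
  apply/negP => hin; apply: hb; apply/In_mem/mapP; exists (gmul (ginv b) a) => //.
  by rewrite ginvM ginvK gmulA gmulgV gmul1g.
- move=> b; case: (coef_spec F1_bij (ccomp (psi b y) g)) => s [_ hs _].
  by exists s => a ha; apply: hs; apply/negP => /In_mem.
- exact: lift_equivariant.
Qed.

Lemma lift_Pimg (x y : C) (f : chom C x y) : is_Pimg f (lift (fhom F f)).
Proof.
have E b a : lift (fhom F f) b a = delta (acth b f) a.
  by rewrite /lift psi_nat (coef_single F1_bij).
by split=> [a|a b ne]; rewrite E ?delta_eq // delta_neq // => e; apply: ne.
Qed.

Lemma lift_id (x : C) : orb_id (lift (cid (fobj F x))).
Proof.
case: (lift_Pimg (cid x)); rewrite fhom_id => h1 h2.
by split=> [a|]; rewrite ?h1 /acth ?fhom_id.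
Qed.

Lemma lift_phi (mu : G) (x : C) : is_phi (lift (psi mu x)).
Proof.
have E b a : lift (psi mu x) b a
    = cast_hom erefl (esym (gactM_obj mu b x)) (delta (cid (act C (gmul b mu) x)) a).
  rewrite /lift psi_comp.
  rewrite (cast_hom_pi erefl erefl _ (congr1 (fobj F) (esym (gactM_obj mu b x)))).
  rewrite (coef_cast F1_bij); congr cast_hom.
  by rewrite -[psi _ x]ccomp1l -fhom_id (coef_single F1_bij).
by split=> [b|a b ne]; rewrite E ?delta_eq // delta_neq ?cast_hom0 // => e; apply: ne.
Qed.

Lemma lift_comp (x y z : C) (h : chom B (fobj F y) (fobj F z))
  (g : chom B (fobj F x) (fobj F y)) :
  orb_comp_rel (lift h) (lift g) (lift (ccomp h g)).
Proof.
move=> b a; case: (coef_spec F1_bij (ccomp (psi b z) h)) => s [us hs Es].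
exists s; split; first exact/NoDup_uniq.
split; first by move=> c hc; rewrite /lift hs ?ccomp0l //; apply/negP => /In_mem.
rewrite /lift ccompA {1}Es ccomp_suml (coef_sum F1_bij); apply: eq_bigr => c _.
by rewrite -ccompA (coef_Fcomp F1_bij).
Qed.

Lemma lift_comp_eq (x y z : C) (h : chom B (fobj F y) (fobj F z))
  (g : chom B (fobj F x) (fobj F y)) (hg : chom B (fobj F x) (fobj F z)) :
  hg = ccomp h g -> orb_comp_rel (lift h) (lift g) (lift hg).
Proof. by move=> ->; apply: lift_comp. Qed.

Lemma lift_lin (x y : C) c (f g : chom B (fobj F x) (fobj F y)) :
  lift (c *: f + g) = fun b a => c *: lift f b a + lift g b a.
Proof.
apply: functional_extensionality_dep => b; apply: functional_extensionality_dep => a.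
by rewrite /lift ccompDr (coef_lin F1_bij).
Qed.

Lemma lift_inj (x y : C) (f g : chom B (fobj F x) (fobj F y)) : lift f = lift g -> f = g.
Proof.
move=> E; apply: (iso_cancel (psi_iso gone y)); apply: (@coef_inj _ _ _ _ _ _ F1_bij x (act C gone y)) => a.
exact: (congr1 (fun h => h gone a) E).
Qed.

Lemma lift_surj (x y : C) (h : orbfam C x y) : is_orbmor h -> exists g, lift g = h.
Proof.
case=> _ /(_ gone) [s0 hs0] h_equiv.
set s := undup s0.
set al := fun a => cast_hom erefl (gact1_obj y) (h gone a).
have hs a : a \notin s -> al a = 0.
  by rewrite mem_undup => ha; rewrite /al hs0 ?cast_hom0 //; move/In_mem; apply/negP.
set g := \sum_(a <- s) ccomp (fhom F (al a)) (psi a x).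
have coef_g : coef g = al by apply: coef_sum_rep; rewrite ?undup_uniq.
exists g; apply: functional_extensionality_dep => b.
apply: functional_extensionality_dep => a.
have := lift_shift g b (gmul (ginv b) a); have := h_equiv b gone (gmul (ginv b) a).
move: (gactM_obj (gmul (ginv b) a) b x) (gactM_obj gone b y).
rewrite gmulKV gmulg1 => e1 e2 -> ->; rewrite coef_g /al.
by rewrite /acth fhom_cast cast_homK; apply: cast_hom_pi.
Qed.

Lemma lift_iso (x y : C) (p : chom B (fobj F x) (fobj F y)) (q : chom B (fobj F y) (fobj F x)) :
  ccomp q p = cid _ -> ccomp p q = cid _ -> is_orbmor (lift p) /\ orb_iso (lift p).
Proof.
move=> qp pq; split; first exact: lift_orbmor.
exists (lift q); split; first exact: lift_orbmor.
split.
- exists (lift (cid (fobj F x))); split; [exact: lift_comp_eq | exact: lift_id].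
- exists (lift (cid (fobj F y))); split; [exact: lift_comp_eq | exact: lift_id].
Qed.
End Lift.

Section Equivalence.
Variables (k : comPzRingType) (G : grp) (C : gcat G) (B : lincat k) (F : klinfun C B)
  (psi : forall (a : G) (x : C), chom B (fobj F x) (fobj F (act C a x)))
  (I : B -> C) (nu : forall z : B, chom B (fobj F (I z)) z).
Hypothesis F1_bij :
  forall (x y : C) (g : chom B (fobj F x) (fobj F y)), exists! f, F1_rep psi f g.
Hypothesis psi_inv : ginv_functor psi.
Hypothesis nu_iso : forall z, is_iso (nu z).

Local Notation lift := (lift F1_bij).

Definition nu_inv (z : B) : chom B z (fobj F (I z)) :=
  proj1_sig (constructive_indefinite_description _ (nu_iso z)).

Lemma nu_invK z : ccomp (nu_inv z) (nu z) = cid _ /\ ccomp (nu z) (nu_inv z) = cid _.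
Proof. by rewrite /nu_inv; case: constructive_indefinite_description. Qed.

Lemma nu_invl z : ccomp (nu_inv z) (nu z) = cid _. Proof. by case: (nu_invK z). Qed.
Lemma nu_invr z : ccomp (nu z) (nu_inv z) = cid _. Proof. by case: (nu_invK z). Qed.

Definition Ihom (z w : B) (g : chom B z w) : orbfam C (I z) (I w) :=
  lift (ccomp (nu_inv w) (ccomp g (nu z))).

Lemma Ihom_equivalence : orb_equivalence I Ihom.
Proof.
split.
- split=> [z w g|z]; first exact: lift_orbmor.
  by rewrite /Ihom ccomp1l nu_invl; apply: lift_id.
- move=> z w v g f; apply: lift_comp_eq.
  by rewrite -!ccompA [ccomp (nu w) _]ccompA nu_invr ccomp1l.
- by move=> z w c f g; rewrite /Ihom -lift_lin ccompDl ccompDr.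
- move=> z w h hh; case: (lift_surj F1_bij psi_inv hh) => g0 E.
  exists (ccomp (nu w) (ccomp g0 (nu_inv z))); split.
  + by rewrite /Ihom -E -!ccompA nu_invl ccomp1r ccompA nu_invl ccomp1l.
  + move=> g'; rewrite /Ihom -E => /(lift_inj psi_inv) <-.
    by rewrite !ccompA nu_invr ccomp1l -ccompA nu_invr ccomp1r.
- move=> x; exists (fobj F x), (lift (nu_inv (fobj F x))).
  exact: lift_iso (nu_invr _) (nu_invl _).
Qed.

Lemma Ihom_deg (a : G) (z w : B) (g : chom B z w) :
  ind_deg F psi I nu a g -> orb_deg a (Ihom g).
Proof.
case=> f Ef; exists f, (lift (fhom F f)), (lift (psi a (I z))).
split; [exact: lift_Pimg | split; first exact: lift_phi].
by apply: lift_comp_eq; rewrite Ef ccompA nu_invl ccomp1l.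
Qed.

Definition eta (x : C) : orbfam C (I (fobj F x)) x := lift (nu (fobj F x)).

Lemma eta_iso_to_P : ginv_iso_to_P F psi I Ihom eta.
Proof.
split.
- by move=> x; apply: lift_iso (nu_invl _) (nu_invr _).
- move=> x y f; exists (lift (ccomp (fhom F f) (nu (fobj F x)))); split.
  + by apply: lift_comp_eq; rewrite ccompA nu_invr ccomp1l.
  + by exists (lift (fhom F f)); split; [exact: lift_Pimg | exact: lift_comp].
- move=> a x; exists (lift (ccomp (psi a x) (nu (fobj F x)))); split.
  + by apply: lift_comp_eq; rewrite ccompA nu_invr ccomp1l.
  + by exists (lift (psi a x)); split; [exact: lift_phi | exact: lift_comp].
Qed.
End Equivalence.

Theorem mainTheorem14 (k : comPzRingType) (G : grp) (C : gcat G) (B : lincat k)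
  (F : klinfun C B)
  (psi : forall (a : G) (x : C), chom B (fobj F x) (fobj F (act C a x)))
  (I : B -> C) (nu : forall z : B, chom B (fobj F (I z)) z) :
  gcovering F psi -> ess_section F I nu ->
  exists (Iobj : B -> C)
         (Ihom : forall z w : B, chom B z w -> orbfam C (Iobj z) (Iobj w)),
    [/\ orb_equivalence Iobj Ihom,
        (forall (a : G) (z w : B) (g : chom B z w),
            ind_deg F psi I nu a g -> orb_deg a (Ihom z w g)) &
        exists eta : forall x : C, orbfam C (Iobj (fobj F x)) x,
          ginv_iso_to_P F psi Iobj Ihom eta].
Proof.
case=> psi_inv F1_bij _ [_ [_ _ _ nu_iso _]].
exists I, (Ihom F1_bij nu_iso); split.
- exact: Ihom_equivalence.
- by move=> a z w g; apply: Ihom_deg.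
- by exists (eta nu F1_bij); apply: eta_iso_to_P.
Qed.
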